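(* Let $X$ be a compact metric space with metric $d$, let $0<L<1$, and let $f\colon X\to X$ be a continuous map which is chain transitive and has the $L$-Lipschitz shadowing property. Then $\mathcal{D}(f)$ is a finite set, and, writing $m=|\mathcal{D}(f)|$, each $D\in\mathcal{D}(f)$ satisfies $f^m(D)\subset D$ and $f^m|_D\colon D\to D$ (with the restricted metric) has the $L$-Lipschitz shadowing property.
   Context: For a continuous map $g\colon Y\to Y$ on a metric space $(Y,d)$ and $\delta>0$, a sequence $(x_i)_{i\ge0}$ is a $\delta$-pseudo orbit of $g$ if $d(g(x_i),x_{i+1})\le\delta$ for all $i\ge0$; it is $\epsilon$-shadowed by $y$ if $d(g^i(y),x_i)\le\epsilon$ for all $i\ge0$. $g$ has the $L$-Lipschitz shadowing property if there is $\delta_0>0$ such that for every $0<\delta\le\delta_0$, every $\delta$-pseudo orbit of $g$ is $L\delta$-shadowed by some point of $Y$. A $\delta$-chain of $f$ is a finite sequence $(x_i)_{i=0}^k$, $k\ge1$, with $d(f(x_i),x_{i+1})\le\delta$ for $0\le i\le k-1$; $k$ is its length; it is a $\delta$-cycle if $x_0=x_k$. $f$ is chain transitive if for all $x,y\in X$ and $\delta>0$ there is a $\delta$-chain with $x_0=x$, $x_k=y$. For chain transitive $f$ and $\delta>0$, let $m(\delta)$ be the greatest common divisor of the lengths of all $\delta$-cycles of $f$, and define $x\sim_\delta y$ iff there is a $\delta$-chain $(x_i)_{i=0}^k$ with $x_0=x$, $x_k=y$ and $m(\delta)\mid k$ (an equivalence relation on $X$). Define $x\sim y$ iff $x\sim_\delta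 y$ for every $\delta>0$; $\mathcal{D}(f)$ is the set of equivalence classes of $\sim$. *)

From Stdlib Require Import Reals Arith List.
Open Scope R_scope.

Section Defs.
Context {X : Type} (d : X -> X -> R).

Definition is_metric : Prop :=
  (forall x y, d x y = 0 <-> x = y) /\
  (forall x y, d x y = d y x) /\
  (forall x y z, d x z <= d x y + d y z).

Definition mopen (U : X -> Prop) : Prop :=
  forall x, U x -> exists e, 0 < e /\ forall y, d x y < e -> U y.

Definition mcompact : Prop :=
  forall (I : Type) (U : I -> X -> Prop),
    (forall i, mopen (U i)) -> (forall x, exists i, U i x) ->
    exists l : list I, forall x, exists i, In i l /\ U i x.

Definition mcontinuous (f : X -> X) : Prop :=
  forall x e, 0 < e -> exists del, 0 < del /\
    forall y, d x y < del -> d (f x) (f y) < e.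

(* g has the L-Lipschitz shadowing property on the subspace Y (restricted
   metric): pseudo orbits in Y, shadowing points in Y. *)
Definition lipschitz_shadowing (Y : X -> Prop) (g : X -> X) (L : R) : Prop :=
  exists del0, 0 < del0 /\
    forall del, 0 < del -> del <= del0 ->
      forall x : nat -> X, (forall i, Y (x i)) ->
        (forall i, d (g (x i)) (x (S i)) <= del) ->
        exists y, Y y /\ forall i, d (Nat.iter i g y) (x i) <= L * del.

Definition chain (f : X -> X) (del : R) (x : nat -> X) (k : nat) : Prop :=
  (1 <= k)%nat /\ forall i, (i < k)%nat -> d (f (x i)) (x (S i)) <= del.

Definition cycle (f : X -> X) (del : R) (x : nat -> X) (k : nat) : Prop :=
  chain f del x k /\ x 0%nat = x k.

Definition chain_transitive (f : X -> X) : Prop :=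
  forall a b del, 0 < del -> exists x k, chain f del x k /\ x 0%nat = a /\ x k = b.

Definition is_cycle_gcd (f : X -> X) (del : R) (m : nat) : Prop :=
  (forall x k, cycle f del x k -> Nat.divide m k) /\
  (forall n, (forall x k, cycle f del x k -> Nat.divide n k) -> Nat.divide n m).

Definition sim_del (f : X -> X) (del : R) (a b : X) : Prop :=
  exists m, is_cycle_gcd f del m /\
    exists x k, chain f del x k /\ x 0%nat = a /\ x k = b /\ Nat.divide m k.

Definition sim (f : X -> X) (a b : X) : Prop :=
  forall del, 0 < del -> sim_del f del a b.

End Defs.

From Stdlib Require Import Reals Arith List Lia Lra Classical.
Open Scope R_scope.

(* For e > 0 let m(e) be the gcd of the lengths of e-cycles and write a ≈_e b
   when some e-chain from a to b has length divisible by m(e).  By chain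
   transitivity ≈_e is an equivalence relation, and it identifies any two
   points within distance < e of a common point.  Let c = (1 + L) / 2.  For
   e <= δ0, shadowing an e-cycle of length k gives a point y with
   y ≈_(c e) f^k y, so m(c e) divides m(e); shadowing an e-chain likewise
   shows that ≈_e is contained in ≈_(c e).  Hence ≈_δ0 is the relation ~, and
   its classes are those of x0, f x0, ..., f^(M-1) x0 for M = m(δ0).  Finally
   a pseudo orbit of f^M becomes one of f by inserting intermediate images,
   and its shadow starts close to, hence in the class of, its first point. *)

Lemma nat_bounded_max (P : nat -> Prop) (B : nat) :
  (exists a, P a) -> (forall n, P n -> (n <= B)%nat) ->
  exists n, P n /\ forall n', P n' -> (n' <= n)%nat.
Proof.
  revert P; induction B as [|B IH]; intros P [a Pa] le_B.
  - exists a; split; [exact Pa|]. intros n' Pn'.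
    pose proof (le_B _ Pn'); pose proof (le_B _ Pa); lia.
  - destruct (classic (P (S B))) as [PSB|nPSB].
    + exists (S B); split; auto.
    + apply IH; [now exists a|]. intros n Pn. pose proof (le_B _ Pn).
      destruct (Nat.eq_dec n (S B)); [subst; contradiction|lia].
Qed.

(* A nonzero element of S bounds the common divisors; the largest one, g, is
   divisible by every common divisor n because lcm n g is again one. *)
Lemma gcd_of_set_exists (S : nat -> Prop) : exists m,
  (forall k, S k -> Nat.divide m k) /\
  (forall n, (forall k, S k -> Nat.divide n k) -> Nat.divide n m).
Proof.
  destruct (classic (exists k0, S k0 /\ k0 <> 0%nat)) as [[k0 [Sk0 k0_nz]]|S_zero].
  - set (C := fun n => forall k, S k -> Nat.divide n k).
    assert (C1 : C 1%nat) by (intros k _; apply Nat.divide_1_l).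
    destruct (nat_bounded_max C k0) as [g [Cg g_max]].
    { now exists 1%nat. }
    { intros n Cn. apply Nat.divide_pos_le; [lia|auto]. }
    exists g; split; [exact Cg|]. intros n Cn.
    assert (n_nz : n <> 0%nat).
    { intros ->. destruct (Cn k0 Sk0) as [q Hq]. lia. }
    assert (g_pos : (1 <= g)%nat) by now apply g_max.
    assert (lcm_eq : Nat.lcm n g = g).
    { apply Nat.le_antisymm.
      - apply g_max. intros k Sk. apply Nat.lcm_least; auto.
      - apply Nat.divide_pos_le; [|apply Nat.divide_lcm_r].
        enough (Nat.lcm n g <> 0%nat) by lia.
        intros E%Nat.lcm_eq_0; lia. }
    rewrite <- lcm_eq. apply Nat.divide_lcm_l.
  - exists 0%nat; split; [|intros; apply Nat.divide_0_r].
    intros k Sk. destruct (Nat.eq_dec k 0) as [->|k_nz].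
    + apply Nat.divide_0_r.
    + exfalso; eauto.
Qed.

Lemma iter_iter_mul {A : Type} (g : A -> A) M i y :
  Nat.iter i (Nat.iter M g) y = Nat.iter (M * i) g y.
Proof.
  induction i as [|i IH]; simpl; [now rewrite Nat.mul_0_r|].
  rewrite IH, <- Nat.iter_add. f_equal. lia.
Qed.

Lemma mul_add_div_mod M q j : (j < M)%nat ->
  ((M * q + j) / M = q /\ (M * q + j) mod M = j)%nat.
Proof.
  intros j_lt. split; symmetry; [apply Nat.div_unique with j|apply Nat.mod_unique with q]; lia.
Qed.

Section Chains.
Variables (X : Type) (d : X -> X -> R) (f : X -> X).
Hypothesis d_metric : is_metric d.

Lemma dist_xx x : d x x = 0.
Proof. now apply (proj1 d_metric). Qed.

Lemma dist_sym x y : d x y = d y x.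
Proof. apply (proj1 (proj2 d_metric)). Qed.

Lemma dist_triangle x y z : d x z <= d x y + d y z.
Proof. apply (proj2 (proj2 d_metric)). Qed.

Lemma dist_ge0 x y : 0 <= d x y.
Proof.
  pose proof (dist_triangle x y x). rewrite dist_xx, (dist_sym y x) in *. lra.
Qed.

Lemma chain_le e e' x k : e <= e' -> chain d f e x k -> chain d f e' x k.
Proof. intros le_e [k_pos Hx]; split; auto. intros i Hi. specialize (Hx i Hi). lra. Qed.

Definition chain_cat (x : nat -> X) (k : nat) (y : nat -> X) : nat -> X :=
  fun i => if (i <=? k)%nat then x i else y (i - k)%nat.

Lemma chain_cat_spec e x k y l : chain d f e x k -> chain d f e y l -> x k = y 0%nat ->
  chain d f e (chain_cat x k y) (k + l) /\ chain_cat x k y 0%nat = x 0%nat /\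
  chain_cat x k y (k + l)%nat = y l.
Proof.
  intros [k_pos Hx] [l_pos Hy] E. unfold chain_cat. split; [split; [lia|]|split].
  - intros i Hi.
    destruct (Nat.leb_spec i k); destruct (Nat.leb_spec (S i) k); try lia.
    + apply Hx; lia.
    + replace i with k by lia. replace (S k - k)%nat with 1%nat by lia.
      rewrite E. apply Hy; lia.
    + replace (S i - k)%nat with (S (i - k)) by lia. apply Hy; lia.
  - reflexivity.
  - destruct (Nat.leb_spec (k + l) k); [lia|]. f_equal; lia.
Qed.

Lemma chain_orbit e u k : 0 <= e -> (1 <= k)%nat ->
  chain d f e (fun i => Nat.iter i f u) k.
Proof. intros e_ge0 k_pos; split; auto. intros i _. simpl. now rewrite dist_xx. Qed.

Lemma chain_set_last e a x l p z : chain d f e x l -> x l = p -> d p z <= a ->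
  chain d f (e + a) (fun i => if (i =? l)%nat then z else x i) l.
Proof.
  intros [l_pos Hx] xl_p pz_a. split; auto. intros i Hi.
  pose proof (dist_ge0 p z).
  destruct (Nat.eqb_spec i l); [lia|]. specialize (Hx i Hi).
  destruct (Nat.eqb_spec (S i) l) as [<-|]; [|lra].
  pose proof (dist_triangle (f (x i)) p z). subst p. lra.
Qed.

Lemma cycle_gcd_exists e : exists m, is_cycle_gcd d f e m.
Proof.
  destruct (gcd_of_set_exists (fun k => exists x, cycle d f e x k)) as [m [Hdiv Hgreat]].
  exists m; split.
  - intros x k C. apply Hdiv; eauto.
  - intros n Hn. apply Hgreat. intros k [x C]. eapply Hn; eauto.
Qed.

Lemma cycle_gcd_unique e m1 m2 : is_cycle_gcd d f e m1 -> is_cycle_gcd d f e m2 -> m1 = m2.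
Proof. intros [A1 B1] [A2 B2]. apply Nat.divide_antisym; [apply B2|apply B1]; auto. Qed.

Lemma cycle_gcd_divide e m x k : is_cycle_gcd d f e m -> chain d f e x k ->
  x 0%nat = x k -> Nat.divide m k.
Proof. intros [Hdiv _] Hc E. apply (Hdiv x k); split; auto. Qed.

Definition chain_dvd (e : R) (m : nat) (a b : X) : Prop :=
  exists x k, chain d f e x k /\ x 0%nat = a /\ x k = b /\ Nat.divide m k.

Lemma chain_dvd_trans e m a b c : chain_dvd e m a b -> chain_dvd e m b c -> chain_dvd e m a c.
Proof.
  intros [x [k [Hx [xa [xb mk]]]]] [y [l [Hy [yb [yc ml]]]]].
  destruct (chain_cat_spec e x k y l Hx Hy ltac:(congruence)) as [Hc [E0 E1]].
  exists (chain_cat x k y), (k + l)%nat; repeat split; try apply Hc; try congruence.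
  now apply Nat.divide_add_r.
Qed.

Lemma chain_dvd_iter e m u k : 0 <= e -> (1 <= k)%nat -> Nat.divide m k ->
  chain_dvd e m u (Nat.iter k f u).
Proof.
  intros e_ge0 k_pos mk. exists (fun i => Nat.iter i f u), k.
  now repeat split; try apply chain_orbit.
Qed.

(* Every del-cycle is an e-cycle, so m(e) divides all their lengths, hence m(del). *)
Lemma chain_dvd_le del e md me a b : del <= e ->
  is_cycle_gcd d f del md -> is_cycle_gcd d f e me ->
  chain_dvd del md a b -> chain_dvd e me a b.
Proof.
  intros le_e Gd Ge [x [k [Hc [xa [xb mk]]]]].
  exists x, k; repeat split; auto; try (eapply chain_le; eauto).
  eapply Nat.divide_trans; [|exact mk]. apply Gd. intros y l [Hy Ey].
  apply (proj1 Ge y). split; auto. eapply chain_le; eauto.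
Qed.

Definition orbit_prefix (x0 : X) (n : nat) : list X :=
  map (fun i => Nat.iter i f x0) (seq 0 n).

Lemma in_orbit_prefix x0 n r :
  In r (orbit_prefix x0 n) <-> exists i, (i < n)%nat /\ r = Nat.iter i f x0.
Proof.
  unfold orbit_prefix. rewrite in_map_iff. split.
  - intros [i [<- Hi%in_seq]]. exists i; split; [lia|auto].
  - intros [i [Hi ->]]. exists i; split; auto. apply in_seq; lia.
Qed.

Hypothesis f_ct : chain_transitive d f.

Section ChainEquivalence.
Variables (e : R) (m : nat).
Hypotheses (e_pos : 0 < e) (m_gcd : is_cycle_gcd d f e m).

Lemma chain_dvd_refl a : chain_dvd e m a a.
Proof.
  destruct (f_ct a a e e_pos) as [x [k [Hc [xa xa']]]].
  exists x, k; repeat split; auto; try apply Hc.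
  eapply cycle_gcd_divide; eauto. congruence.
Qed.

Lemma chain_dvd_sym a b : chain_dvd e m a b -> chain_dvd e m b a.
Proof.
  intros [y [l [Hy [ya [yb ml]]]]].
  destruct (f_ct b a e e_pos) as [x [k [Hx [xb xa]]]].
  exists x, k; repeat split; auto; try apply Hx.
  destruct (chain_cat_spec e y l x k Hy Hx ltac:(congruence)) as [Hc [E0 E1]].
  apply (Nat.divide_add_cancel_r _ l); auto.
  eapply cycle_gcd_divide; eauto. congruence.
Qed.

Lemma chain_dvd_length a b x k : chain_dvd e m a b -> chain d f e x k ->
  x 0%nat = a -> x k = b -> Nat.divide m k.
Proof.
  intros Hab Hx xa xb.
  destruct (chain_dvd_sym a b Hab) as [y [l [Hy [yb [ya ml]]]]].
  destruct (chain_cat_spec e x k y l Hx Hy ltac:(congruence)) as [Hc [E0 E1]].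
  apply (Nat.divide_add_cancel_r _ l); auto. rewrite Nat.add_comm.
  eapply cycle_gcd_divide; eauto. congruence.
Qed.

Lemma chain_dvd_iter_divide u k : (1 <= k)%nat ->
  chain_dvd e m u (Nat.iter k f u) -> Nat.divide m k.
Proof.
  intros k_pos Hu. apply (chain_dvd_length _ _ (fun i => Nat.iter i f u) k Hu); auto.
  apply chain_orbit; auto; lra.
Qed.

Lemma chain_dvd_same_length u v w j x y :
  chain d f e x j -> x 0%nat = u -> x j = v ->
  chain d f e y j -> y 0%nat = u -> y j = w -> chain_dvd e m v w.
Proof.
  intros Hx xu xv Hy yu yw.
  destruct (f_ct v u e e_pos) as [z [r [Hz [zv zu]]]].
  destruct (chain_cat_spec e z r x j Hz Hx ltac:(congruence)) as [Hzx [Ezx0 Ezx1]].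
  destruct (chain_cat_spec e z r y j Hz Hy ltac:(congruence)) as [Hzy [Ezy0 Ezy1]].
  exists (chain_cat z r y), (r + j)%nat; repeat split; try apply Hzy; try congruence.
  eapply cycle_gcd_divide; [eauto|apply Hzx|]. congruence.
Qed.

(* An (e - a)-chain from y to p, redirected to end at z or at y, gives an
   e-chain to z and an e-cycle of the same length. *)
Lemma chain_dvd_close a p y z : a < e -> d p y <= a -> d p z <= a -> chain_dvd e m y z.
Proof.
  intros a_lt py pz.
  pose proof (dist_ge0 p y).
  destruct (f_ct y p (e - a) ltac:(lra)) as [x [l [Hx [xy xp]]]].
  assert (l_pos : (1 <= l)%nat) by apply Hx.
  assert (Cz := chain_set_last _ _ _ _ _ _ Hx xp pz).
  assert (Cy := chain_set_last _ _ _ _ _ _ Hx xp py).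
  replace (e - a + a) with e in Cz, Cy by ring.
  exists (fun i => if (i =? l)%nat then z else x i), l; repeat split; try apply Cz.
  - destruct (Nat.eqb_spec 0 l); [lia|auto].
  - now rewrite Nat.eqb_refl.
  - eapply cycle_gcd_divide; [eauto|apply Cy|]. cbv beta.
    rewrite Nat.eqb_refl. destruct (Nat.eqb_spec 0 l); [lia|auto].
Qed.

End ChainEquivalence.

Section Shadowing.
Variables (L del0 : R).
Hypotheses (L_pos : 0 < L) (L_lt1 : L < 1) (del0_pos : 0 < del0).
Hypothesis f_shadow : forall del (x : nat -> X), 0 < del -> del <= del0 ->
  (forall i, d (f (x i)) (x (S i)) <= del) ->
  exists y, forall i, d (Nat.iter i f y) (x i) <= L * del.

Lemma shadow_chain_ends del x k : 0 < del -> del <= del0 -> chain d f del x k ->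
  exists y, d (x 0%nat) y <= L * del /\ d (x k) (Nat.iter k f y) <= L * del.
Proof.
  intros del_pos del_le [k_pos Hx].
  set (p := fun i => if (i <=? k)%nat then x i else Nat.iter (i - k) f (x k)).
  destruct (f_shadow del p del_pos del_le) as [y Hy].
  - intros i. unfold p.
    destruct (Nat.leb_spec i k); destruct (Nat.leb_spec (S i) k); try lia.
    + apply Hx; lia.
    + replace i with k by lia. replace (S k - k)%nat with 1%nat by lia.
      simpl. rewrite dist_xx; lra.
    + replace (S i - k)%nat with (S (i - k)) by lia. simpl. rewrite dist_xx; lra.
  - exists y. split; rewrite dist_sym.
    + apply (Hy 0%nat).
    + specialize (Hy k). unfold p in Hy. now rewrite Nat.leb_refl in Hy.
Qed.

(* c lies strictly between L and 1: the shadowing error L * del is smaller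
   than c * del, while c ^ n * del0 still tends to 0. *)
Let c := (1 + L) / 2.

Lemma cycle_gcd_contract_divide del md mc : 0 < del -> del <= del0 ->
  is_cycle_gcd d f del md -> is_cycle_gcd d f (c * del) mc -> Nat.divide mc md.
Proof.
  intros del_pos del_le Gd Gc. apply Gd. intros x k [Hx x0k].
  destruct (shadow_chain_ends del x k del_pos del_le Hx) as [y [Hy0 Hyk]].
  assert (err_lt : L * del < c * del) by (unfold c; nra).
  apply (chain_dvd_iter_divide (c * del) mc) with y; try apply Hx; auto.
  - unfold c; nra.
  - apply (chain_dvd_close _ _ Gc (L * del) (x 0%nat)); auto.
    now rewrite x0k.
Qed.

Lemma chain_dvd_contract del md mc a b : 0 < del -> del <= del0 ->
  is_cycle_gcd d f del md -> is_cycle_gcd d f (c * del) mc ->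
  chain_dvd del md a b -> chain_dvd (c * del) mc a b.
Proof.
  intros del_pos del_le Gd Gc [x [k [Hx [xa [xb mk]]]]].
  destruct (shadow_chain_ends del x k del_pos del_le Hx) as [y [Hy0 Hyk]].
  assert (k_pos : (1 <= k)%nat) by apply Hx.
  assert (c_del_pos : 0 < c * del) by (unfold c; nra).
  assert (err_lt : L * del < c * del) by (unfold c; nra).
  assert (err_ge0 : 0 <= L * del) by nra.
  apply chain_dvd_trans with y; [|apply chain_dvd_trans with (Nat.iter k f y)].
  - apply (chain_dvd_close _ _ Gc (L * del) a); auto.
    rewrite dist_xx; lra. congruence.
  - apply chain_dvd_iter; [lra|exact k_pos|].
    apply Nat.divide_trans with md; [|exact mk].
    exact (cycle_gcd_contract_divide del md mc del_pos del_le Gd Gc).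
  - apply (chain_dvd_close _ _ Gc (L * del) b); auto.
    congruence. rewrite dist_xx; lra.
Qed.

Lemma contract_pow_small e : 0 < e -> exists n, c ^ n * del0 <= e.
Proof.
  intros e_pos.
  destruct (pow_lt_1_zero c ltac:(unfold c; rewrite Rabs_right; lra) (e / del0))
    as [N HN].
  { now apply Rdiv_lt_0_compat. }
  exists N. specialize (HN N (le_n _)).
  rewrite Rabs_right in HN by (apply Rle_ge, pow_le; unfold c; lra).
  apply Rmult_lt_compat_r with (r := del0) in HN; auto.
  unfold Rdiv in HN. rewrite Rmult_assoc, Rinv_l in HN; lra.
Qed.

Lemma sim_iff_chain_dvd M a b : is_cycle_gcd d f del0 M ->
  sim d f a b <-> chain_dvd del0 M a b.
Proof.
  intros GM. split.
  - intros Hab. destruct (Hab del0 del0_pos) as [m [G Hr]].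
    now rewrite <- (cycle_gcd_unique _ _ _ G GM).
  - intros Hab e e_pos. destruct (cycle_gcd_exists e) as [me Ge].
    exists me; split; [exact Ge|]. change (chain_dvd e me a b).
    assert (contracted : forall n mn, is_cycle_gcd d f (c ^ n * del0) mn ->
              chain_dvd (c ^ n * del0) mn a b).
    { induction n as [|n IH]; intros mn Gn.
      - simpl in *. rewrite Rmult_1_l in *. now rewrite (cycle_gcd_unique _ _ _ Gn GM).
      - destruct (cycle_gcd_exists (c ^ n * del0)) as [mp Gp].
        assert (pow_c : 0 < c ^ n <= 1).
        { split; [apply pow_lt|rewrite <- (pow1 n); apply pow_incr]; unfold c; lra. }
        replace (c ^ S n * del0) with (c * (c ^ n * del0)) in * by (simpl; ring).
        apply (chain_dvd_contract (c ^ n * del0) mp); auto; nra. }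
    destruct (Rle_lt_dec del0 e) as [le_e|lt_e].
    + eapply chain_dvd_le; eauto.
    + destruct (contract_pow_small e e_pos) as [n Hn].
      destruct (cycle_gcd_exists (c ^ n * del0)) as [mn Gn].
      eapply chain_dvd_le; [exact Hn|exact Gn|exact Ge|]. auto.
Qed.

(* Filling in the intermediate images f^j (x i), 0 < j < M, turns a pseudo
   orbit of f^M into one of f with the same precision. *)
Lemma iter_shadow M del x : (1 <= M)%nat -> 0 < del -> del <= del0 ->
  (forall i, d (Nat.iter M f (x i)) (x (S i)) <= del) ->
  exists y, forall i, d (Nat.iter i (Nat.iter M f) y) (x i) <= L * del.
Proof.
  intros M_pos del_pos del_le Hx.
  set (p := fun n => Nat.iter (n mod M) f (x (n / M)%nat)).
  destruct (f_shadow del p del_pos del_le) as [y Hy].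
  - intros n. unfold p.
    pose proof (Nat.div_mod_eq n M) as n_eq.
    pose proof (Nat.mod_upper_bound n M ltac:(lia)) as n_mod_lt.
    set (q := (n / M)%nat) in *. set (j := (n mod M)%nat) in *.
    destruct (Nat.lt_ge_cases (S j) M) as [Sj_lt|Sj_ge].
    + replace (S n) with (M * q + S j)%nat by lia.
      destruct (mul_add_div_mod M q (S j) Sj_lt) as [-> ->].
      simpl. rewrite dist_xx; lra.
    + replace (S n) with (M * S q + 0)%nat by lia.
      destruct (mul_add_div_mod M (S q) 0 ltac:(lia)) as [-> ->].
      replace M with (S j) in Hx by lia. apply Hx.
  - exists y. intros i. rewrite iter_iter_mul. specialize (Hy (M * i)%nat). unfold p in Hy.
    destruct (mul_add_div_mod M i 0 ltac:(lia)) as [Ediv Emod].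
    rewrite Nat.add_0_r in Ediv, Emod. now rewrite Ediv, Emod in Hy.
Qed.

Section Classes.
Variables (M : nat) (x0 : X).
Hypothesis M_gcd : is_cycle_gcd d f del0 M.

Lemma cycle_gcd_pos : (1 <= M)%nat.
Proof.
  destruct (f_ct x0 x0 del0 del0_pos) as [x [k [Hx [xa xb]]]].
  assert (k_pos : (1 <= k)%nat) by apply Hx.
  destruct (cycle_gcd_divide _ _ _ _ M_gcd Hx ltac:(congruence)) as [q Hq]. lia.
Qed.

Lemma orbit_prefix_inequiv i j : (i < j < M)%nat ->
  ~ chain_dvd del0 M (Nat.iter i f x0) (Nat.iter j f x0).
Proof.
  intros ij Hij. replace j with ((j - i) + i)%nat in Hij by lia.
  rewrite Nat.iter_add in Hij.
  apply chain_dvd_iter_divide in Hij; auto; [|lia].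
  apply Nat.divide_pos_le in Hij; lia.
Qed.

Lemma orbit_prefix_NoDup : NoDup (orbit_prefix x0 M).
Proof.
  apply NoDup_map_NoDup_ForallPairs; [|apply seq_NoDup].
  intros i j Hi%in_seq Hj%in_seq E.
  destruct (lt_eq_lt_dec i j) as [[lt_ij|eq_ij]|lt_ji]; auto; exfalso.
  - apply (orbit_prefix_inequiv i j); [lia|]. rewrite E. now apply chain_dvd_refl.
  - apply (orbit_prefix_inequiv j i); [lia|]. rewrite E. now apply chain_dvd_refl.
Qed.

Lemma orbit_prefix_sim_eq r1 r2 : In r1 (orbit_prefix x0 M) -> In r2 (orbit_prefix x0 M) ->
  sim d f r1 r2 -> r1 = r2.
Proof.
  intros (i & i_lt & ->)%in_orbit_prefix (j & j_lt & ->)%in_orbit_prefix Hij.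
  rewrite (sim_iff_chain_dvd M) in Hij by exact M_gcd.
  destruct (lt_eq_lt_dec i j) as [[lt_ij|eq_ij]|lt_ji]; [exfalso| now subst |exfalso].
  - now apply (orbit_prefix_inequiv i j); [lia|].
  - apply (orbit_prefix_inequiv j i); [lia|]. now apply chain_dvd_sym.
Qed.

(* A chain from x0 to x of length k and the orbit segment of the same length
   end in equivalent points, and f^k x0 ~ f^(k mod M) x0. *)
Lemma orbit_prefix_cover x : exists r, In r (orbit_prefix x0 M) /\ sim d f r x.
Proof.
  pose proof cycle_gcd_pos as M_pos.
  destruct (f_ct x0 x del0 del0_pos) as [y [k [Hy [yx0 yx]]]].
  assert (k_pos : (1 <= k)%nat) by apply Hy.
  exists (Nat.iter (k mod M) f x0). split.
  { apply in_orbit_prefix. exists (k mod M); split; auto. apply Nat.mod_upper_bound; lia. }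
  rewrite (sim_iff_chain_dvd M) by exact M_gcd.
  apply chain_dvd_trans with (Nat.iter k f x0).
  - assert (k_split : Nat.iter k f x0 = Nat.iter (M * (k / M)) f (Nat.iter (k mod M) f x0)).
    { rewrite <- Nat.iter_add. f_equal. apply Nat.div_mod_eq. }
    rewrite k_split.
    destruct (k / M)%nat as [|q]; [rewrite Nat.mul_0_r; now apply chain_dvd_refl|].
    apply chain_dvd_iter; [lra|nia|apply Nat.divide_factor_l].
  - apply (chain_dvd_same_length _ _ del0_pos M_gcd x0 _ _ k (fun i => Nat.iter i f x0) y);
      auto using chain_orbit with real.
Qed.

Lemma class_iter_invariant r x : sim d f r x -> sim d f r (Nat.iter M f x).
Proof.
  rewrite !(sim_iff_chain_dvd M) by exact M_gcd. intros Hrx.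
  apply chain_dvd_trans with x; auto.
  apply chain_dvd_iter; [lra|exact cycle_gcd_pos|apply Nat.divide_refl].
Qed.

(* The f^M-shadow of a pseudo orbit in a class starts within L del of its
   first point, hence lies in the same class. *)
Lemma class_lipschitz_shadowing r :
  lipschitz_shadowing d (fun x => sim d f r x) (Nat.iter M f) L.
Proof.
  exists del0; split; auto. intros del del_pos del_le x Hx Hpo.
  destruct (iter_shadow M del x cycle_gcd_pos del_pos del_le Hpo) as [y Hy].
  exists y; split; auto.
  rewrite (sim_iff_chain_dvd M) by exact M_gcd.
  apply chain_dvd_trans with (x 0%nat); [now apply (sim_iff_chain_dvd M)|].
  apply (chain_dvd_close _ _ M_gcd (L * del) (x 0%nat)); try nra.
  - rewrite dist_xx; nra.
  - rewrite dist_sym. apply (Hy 0%nat).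
Qed.

End Classes.
End Shadowing.
End Chains.

Theorem theorem1p9 (X : Type) (d : X -> X -> R) (L : R) (f : X -> X) :
  is_metric d -> mcompact d -> 0 < L -> L < 1 ->
  mcontinuous d f -> chain_transitive d f ->
  lipschitz_shadowing d (fun _ => True) f L ->
  exists reps : list X,
    NoDup reps /\
    (forall r1 r2, In r1 reps -> In r2 reps -> sim d f r1 r2 -> r1 = r2) /\
    (forall x, exists r, In r reps /\ sim d f r x) /\
    (forall r, In r reps ->
       (forall x, sim d f r x -> sim d f r (Nat.iter (length reps) f x)) /\
       lipschitz_shadowing d (fun x => sim d f r x) (Nat.iter (length reps) f) L).
Proof.
  intros d_metric _ L_pos L_lt1 _ f_ct [del0 [del0_pos f_shadow]].
  assert (shadow : forall del x, 0 < del -> del <= del0 ->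
            (forall i, d (f (x i)) (x (S i)) <= del) ->
            exists y, forall i, d (Nat.iter i f y) (x i) <= L * del).
  { intros del x del_pos del_le Hx.
    destruct (f_shadow del del_pos del_le x (fun _ => I) Hx) as [y [_ Hy]]. eauto. }
  destruct (classic (inhabited X)) as [[x0]|X_empty].
  2: { exists nil. split; [constructor|]. split; [intros ? ? []|].
       split; [|intros ? []]. intros x. exfalso. exact (X_empty (inhabits x)). }
  destruct (cycle_gcd_exists X d f del0) as [M M_gcd].
  exists (orbit_prefix X f x0 M).
  replace (length (orbit_prefix X f x0 M)) with M
    by (unfold orbit_prefix; now rewrite length_map, length_seq).
  repeat split.
  - eapply orbit_prefix_NoDup; eauto.
  - intros; eapply (orbit_prefix_sim_eq _ _ _ d_metric f_ct L); eauto.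
  - intros; eapply (orbit_prefix_cover _ _ _ d_metric f_ct L); eauto.
  - intros; eapply (class_iter_invariant _ _ _ d_metric f_ct L); eauto.
  - intros; eapply (class_lipschitz_shadowing _ _ _ d_metric f_ct L); eauto.
Qed.
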